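(* Let $\Gamma$ be a countably infinite discrete group and let $\boldsymbol{a}$ be a measure preserving action of $\Gamma$. The following are equivalent: (1) every non-trivial factor of $\boldsymbol{a}$ has finite kernel; (2) every infinite normal subgroup of $\Gamma$ acts ergodically (under the restriction of $\boldsymbol{a}$).
   Context: A measure preserving action $\boldsymbol{a}=\Gamma\curvearrowright^a (X,\mu)$ consists of a standard Borel space $X$, a Borel probability measure $\mu$, and a Borel $\mu$-preserving action of $\Gamma$ on $X$. An action $\boldsymbol{b}=\Gamma\curvearrowright^b (Y,\nu)$ is a factor of $\boldsymbol{a}$ if there is a measurable $\pi:X\to Y$ with $\pi_*\mu=\nu$ and, for each $\gamma\in\Gamma$, $\pi(\gamma^a x)=\gamma^b\pi(x)$ for $\mu$-a.e. $x$. An action is non-trivial if its measure is not a point mass. The kernel of $\boldsymbol{b}$ is $\{\gamma\in\Gamma : \nu(\{y : \gamma^b y = y\})=1\}$. *)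

From HB Require Import structures.
From mathcomp Require Import all_boot all_order all_algebra.
From mathcomp Require Import all_classical all_reals all_analysis.
From mathcomp Require monoid.

Set Implicit Arguments.
Unset Strict Implicit.
Unset Printing Implicit Defensive.

Import Order.TTheory GRing.Theory Num.Theory.
Local Open Scope classical_set_scope.
Local Open Scope ring_scope.

Notation gmul := (@monoid.mul _).
Notation gone := (@monoid.one _).
Notation ginv := (@monoid.inv _).

Definition countably_infinite (G : Type) :=
  countable [set: G] /\ infinite_set [set: G].

Definition normal_subgroup (G : groupType) (N : set G) :=
  [/\ N gone,
      (forall g h, N g -> N h -> N (gmul g h)),
      (forall g, N g -> N (ginv g)) &
      (forall g n, N n -> N (gmul (ginv g) (gmul n g)))].

(* Standard Borel space: Borel isomorphic to a Borel subset of R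
   (equivalently, by Kuratowski's theorem, to a Borel subset of a Polish space). *)
Definition standard_borel (R : realType) (d : measure_display)
    (X : measurableType d) :=
  exists f : X -> R,
    [/\ injective f, measurable_fun setT f, measurable (range f) &
        forall A, measurable A -> measurable (f @` A)].

Definition mp_action (G : groupType) (R : realType) (d : measure_display)
    (X : measurableType d) (mu : set X -> \bar R) (act : G -> X -> X) :=
  [/\ (forall x, act gone x = x),
      (forall g h x, act (gmul g h) x = act g (act h x)),
      (forall g, measurable_fun setT (act g)) &
      (forall g A, measurable A -> mu (act g @^-1` A) = mu A)].

Definition is_factor (G : groupType) (R : realType)
    (d : measure_display) (X : measurableType d) (mu : {measure set X -> \bar R})
    (act : G -> X -> X)
    (d' : measure_display) (Y : measurableType d') (nu : set Y -> \bar R)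
    (actY : G -> Y -> Y) :=
  exists pi : X -> Y,
    [/\ measurable_fun setT pi,
        (forall B, measurable B -> mu (pi @^-1` B) = nu B) &
        forall g, {ae mu, forall x, pi (act g x) = actY g (pi x)}].

Definition nontrivial (R : realType) (d : measure_display) (Y : measurableType d)
    (nu : set Y -> \bar R) :=
  ~ exists y : Y, forall B, measurable B -> nu B = \d_y B.

Definition action_kernel (G : groupType) (R : realType) (d : measure_display)
    (Y : measurableType d) (nu : set Y -> \bar R) (actY : G -> Y -> Y) : set G :=
  [set g | nu [set y | actY g y = y] = 1%E].

Definition ergodic_on (G : groupType) (R : realType) (d : measure_display)
    (X : measurableType d) (mu : set X -> \bar R) (act : G -> X -> X) (N : set G) :=
  forall A, measurable A -> (forall g, N g -> act g @^-1` A = A) ->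
    mu A = 0%E \/ mu A = 1%E.

From HB Require Import structures.
From mathcomp Require Import all_boot all_order all_algebra.
From mathcomp Require Import all_classical all_reals all_analysis.
From mathcomp Require Import measurable_realfun.
From mathcomp Require Import lra.
From mathcomp Require monoid.
Import Order.TTheory GRing.Theory Num.Theory.
Import numFieldNormedType.Exports.
Local Open Scope classical_set_scope.
Local Open Scope ring_scope.

(* (1) => (2): if N is an infinite normal subgroup and A an N-invariant set with
   0 < mu A < 1, record for each x its A-name, the bit sequence (g x \in A)_g.
   This is a factor map onto the shift on {0,1}^G, which is carried to the real
   line by a ternary expansion; the factor is non-trivial and, N being normal
   and A N-invariant, N acts trivially on it, so its kernel is infinite.
   (2) => (1): the kernel K of a factor is a normal subgroup; if it is infinite
   it acts ergodically on X, and the preimage of any measurable set of the factor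
   is a.e. K-invariant, so the factor measure only takes the values 0 and 1.
   A measurable injection into R turns such a measure into a point mass. *)

Section TernaryCode.
Variable R : realType.
Implicit Types (f : nat -> bool) (y : R).

(* [ternary_code f] is the real number with ternary expansion [0.f0 f1 f2 ...];
   using only the digits 0 and 1 makes every digit readable by a threshold. *)
Fixpoint ternary_psum (m : nat) f : R :=
  if m is m'.+1 then ((f 0%N)%:R + ternary_psum m' (fun k => f k.+1)) / 3 else 0.

Lemma ternary_psum_ge0 m f : 0 <= ternary_psum m f.
Proof. by elim: m f => [//|m IH] f /=; rewrite divr_ge0 ?addr_ge0. Qed.

Lemma ternary_psum_le m f : ternary_psum m f <= 2^-1.
Proof.
elim: m f => [|m IH] f /=; first by rewrite invr_ge0.
have fb : (f 0%N)%:R <= 1 :> R by case: (f 0%N).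
have := IH (fun k => f k.+1); rewrite ler_pdivrMr //; lra.
Qed.

Lemma ternary_psumS m f : ternary_psum m f <= ternary_psum m.+1 f.
Proof.
elim: m f => [|m IH] f /=; first by rewrite -/(ternary_psum 1 f) ternary_psum_ge0.
by rewrite ler_pM2r ?invr_gt0 // lerD2l IH.
Qed.

Lemma is_cvg_ternary_psum f : cvgn (ternary_psum ^~ f : R^nat).
Proof.
apply: nondecreasing_is_cvgn.
  by apply/nondecreasing_seqP => n; exact: ternary_psumS.
by exists 2^-1 => _ [n _ <-]; exact: ternary_psum_le.
Qed.

Definition ternary_code f : R := limn (ternary_psum ^~ f).

Lemma ternary_code_ge0 f : 0 <= ternary_code f.
Proof.
apply: limr_ge; first exact: is_cvg_ternary_psum.
by apply: nearW => n; exact: ternary_psum_ge0.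
Qed.

Lemma ternary_code_le f : ternary_code f <= 2^-1.
Proof.
apply: limr_le; first exact: is_cvg_ternary_psum.
by apply: nearW => n; exact: ternary_psum_le.
Qed.

Lemma ternary_codeS f :
  ternary_code f = ((f 0%N)%:R + ternary_code (fun k => f k.+1)) / 3.
Proof.
have lim_code : (fun m => ternary_psum m.+1 f) @ \oo --> ternary_code f.
  by have := is_cvg_ternary_psum f; rewrite -cvg_shiftS.
have lim_rec : (fun m => ternary_psum m.+1 f) @ \oo -->
    ((f 0%N)%:R + ternary_code (fun k => f k.+1)) / 3.
  apply: cvgM; last exact: cvg_cst.
  by apply: cvgD; [exact: cvg_cst | exact: is_cvg_ternary_psum].
exact: cvg_unique lim_code lim_rec.
Qed.

Lemma ternary_code_ge3V f : (3^-1 <= ternary_code f) = f 0%N.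
Proof.
rewrite ternary_codeS.
have := ternary_code_ge0 (fun k => f k.+1); have := ternary_code_le (fun k => f k.+1).
case: (f 0%N) => /= h1 h0.
  by apply/idP; rewrite ler_pdivlMr //; lra.
by apply/negbTE; rewrite -ltNge ltr_pdivrMr //; lra.
Qed.

Fixpoint ternary_rem (n : nat) y : R :=
  if n is n'.+1 then 3 * ternary_rem n' y - (nat_of_bool (3^-1 <= ternary_rem n' y))%:R
  else y.

Definition ternary_digit n y : bool := 3^-1 <= ternary_rem n y.

Lemma ternary_rem_code n f :
  ternary_rem n (ternary_code f) = ternary_code (fun k => f (k + n)%N).
Proof.
elim: n => [|n IH] /=; first by congr ternary_code; apply: funext => k; rewrite addn0.
rewrite IH ternary_code_ge3V add0n [X in 3 * X]ternary_codeS.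
have -> : (fun k => f (k.+1 + n)%N) = (fun k => f (k + n.+1)%N).
  by apply: funext => k; rewrite addSnnS.
by rewrite mulrC divfK ?pnatr_eq0 // addrC addKr.
Qed.

Lemma ternary_digit_code n f : ternary_digit n (ternary_code f) = f n.
Proof. by rewrite /ternary_digit ternary_rem_code ternary_code_ge3V. Qed.

End TernaryCode.

Arguments ternary_rem {R}.
Arguments ternary_digit {R}.

Lemma measurable_fun_natr_bool d (T : measurableType d) (R : realType)
    (b : T -> bool) :
  measurable [set x | b x] -> measurable_fun setT (fun x => (b x)%:R : R).
Proof.
move=> mb; have -> : (fun x => (b x)%:R : R) = \1_[set x | b x].
  by apply: funext => x; rewrite indicE mem_setE.
exact: measurable_indic.
Qed.

Lemma measurable_ternary_code d (T : measurableType d) (R : realType)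
    (b : nat -> T -> bool) :
  (forall k, measurable [set x | b k x]) ->
  measurable_fun setT (fun x => ternary_code R (b ^~ x)).
Proof.
move=> mb; apply: (measurable_fun_cvg (h := fun m x => ternary_psum R m (b ^~ x))).
  move=> m; elim: m b mb => [|m IH] b mb /=; first exact: measurable_cst.
  apply: measurable_funM; last exact: measurable_cst.
  apply: measurable_funD; first exact: measurable_fun_natr_bool.
  exact: (IH (fun k => b k.+1)).
by move=> x _; exact: is_cvg_ternary_psum.
Qed.

Lemma measurable_ternary_rem (R : realType) n : measurable_fun setT (@ternary_rem R n).
Proof.
elim: n => [|n IH] /=; first exact: measurable_id.
apply: measurable_funB; first by apply: measurable_funM => //; exact: measurable_cst.
apply: measurable_fun_natr_bool; rewrite -[X in measurable X]setTI.
have -> : [set y : R | 3^-1 <= ternary_rem n y] = ternary_rem n @^-1` `[3^-1, +oo[.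
  by apply/seteqP; split => y /=; rewrite in_itv /= andbT.
exact: IH.
Qed.

Lemma measurable_ternary_digit (R : realType) n :
  measurable [set y : R | ternary_digit n y].
Proof.
rewrite -[X in measurable X]setTI.
have -> : [set y : R | ternary_digit n y] = ternary_rem n @^-1` `[3^-1, +oo[.
  by apply/seteqP; split => y /=; rewrite /ternary_digit in_itv /= andbT.
exact: measurable_ternary_rem.
Qed.

Lemma probability1_setC0 {d} {T : measurableType d} {R : realType}
    (P : probability T R) {A : set T} :
  measurable A -> P A = 1%E <-> P (~` A) = 0%E.
Proof.
move=> mA; split=> h; first by rewrite probability_setC // h subee.
have mCA : measurable (~` A) by exact: measurableC.
by rewrite -[A]setCK probability_setC // h sube0.
Qed.

Lemma ae_forall_countable d (T : measurableType d) (R : realType)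
    (mu : {measure set T -> \bar R}) (I : Type) (P : I -> T -> Prop) :
  countable [set: I] -> (forall i, \forall x \ae mu, P i x) ->
  \forall x \ae mu, forall i, P i x.
Proof.
move=> /countable_injP[j jinj] aeP.
have aej n : \forall x \ae mu, forall i, j i = n -> P i x.
  have [[i <-]|nj] := pselect (exists i, j i = n); last first.
    by apply: aeW => x i ji; case: nj; exists i.
  by apply: filterS (aeP i) => x Pix i' ji'; rewrite (jinj i' i) ?in_setT.
apply: filterS (ae_foralln aej) => x Px i; exact: Px.
Qed.

Section ActionKernel.
Context {G : groupType} {R : realType} {d : measure_display} {Y : measurableType d}
  {nu : probability Y R} {actY : G -> Y -> Y}.
Hypothesis actYP : mp_action nu actY.
Context {f : Y -> R}.
Hypotheses (finj : injective f) (mf : measurable_fun setT f).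

Lemma measurable_fixed g : measurable [set y | actY g y = y].
Proof.
have [_ _ mact _] := actYP.
have -> : [set y | actY g y = y] = setT `&` (fun y => f (actY g y) - f y) @^-1` [set 0].
  apply/seteqP; split => y /=; first by move=> ->; rewrite subrr.
  by move=> [_ /eqP]; rewrite subr_eq0 => /eqP /finj.
by apply: measurable_funB => //; exact: measurableT_comp.
Qed.

Lemma action_kernelP g :
  action_kernel nu actY g <-> nu.-negligible (~` [set y | actY g y = y]).
Proof.
have mfix := measurable_fixed g.
by rewrite /action_kernel /= probability1_setC0 // negligibleP //; exact: measurableC.
Qed.

Lemma mp_actK g : cancel (actY g) (actY (ginv g)).
Proof. by have [act1 actM _ _] := actYP => y; rewrite -actM monoid.mulVg act1. Qed.

Lemma mp_actKV g : cancel (actY (ginv g)) (actY g).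
Proof. by have [act1 actM _ _] := actYP => y; rewrite -actM monoid.mulgV act1. Qed.

Lemma action_kernel_normal : normal_subgroup (action_kernel nu actY).
Proof.
have [act1 actM _ actP] := actYP.
split=> [|g h|g|g k].
- apply/action_kernelP.
  suff -> : ~` [set y | actY gone y = y] = set0 by exact: negligible_set0.
  by apply/seteqP; split => y //=; rewrite act1.
- move=> /action_kernelP Kg /action_kernelP Kh; apply/action_kernelP.
  apply: negligibleS (negligibleU Kg Kh) => y /=; rewrite actM => hy.
  by apply: contrapT => /not_orP[/contrapT gy /contrapT hy']; apply: hy; rewrite hy' gy.
- move=> /action_kernelP Kg; apply/action_kernelP.
  suff -> : [set y | actY (ginv g) y = y] = [set y | actY g y = y] by [].
  apply/seteqP; split => y /= e; first by rewrite -{1}e mp_actKV.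
  by rewrite -{1}e mp_actK.
- rewrite /action_kernel /=.
  have -> : [set y | actY (gmul (ginv g) (gmul k g)) y = y] =
            actY g @^-1` [set y | actY k y = y].
    apply/seteqP; split => y /=; rewrite !actM => e; first by rewrite -{2}e mp_actKV.
    by rewrite e mp_actK.
  by rewrite actP //; exact: measurable_fixed.
Qed.

End ActionKernel.

Section ErgodicAeInvariant.
Context {G : groupType} {R : realType} {d : measure_display} {X : measurableType d}
  {mu : probability X R} {act : G -> X -> X}.
Hypotheses (actP : mp_action mu act) (cG : countable [set: G]).
Context {N : set G}.
Hypotheses (N1 : N gone) (NM : forall g h, N g -> N h -> N (gmul g h))
  (NV : forall g, N g -> N (ginv g)).
Context {C : set X}.
Hypothesis mC : measurable C.

(* An N-invariant subset of C, equal to C up to a null set when C is a.e.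
   N-invariant. *)
Let core := [set x | forall g, N g -> C (act g x)].

Let measurable_core : measurable core.
Proof.
have -> : core = ~` \bigcup_g [set x | N g /\ ~ C (act g x)].
  apply/seteqP; split=> [x cx [g _ [Ng]] | x ncx g Ng]; first by apply; exact: cx.
  by apply: contrapT => Cgx; apply: ncx; exists g.
apply/measurableC/countable_bigcupT_measurable => // g.
have [Ng|nNg] := pselect (N g); last first.
  by have -> : [set x | N g /\ ~ C (act g x)] = set0 by apply/seteqP; split=> x // [].
have -> : [set x | N g /\ ~ C (act g x)] = setT `&` act g @^-1` (~` C).
  by apply/seteqP; split=> x /= [].
by have [_ _ mact _] := actP; apply: mact => //; exact: measurableC.
Qed.

Let core_invariant g : N g -> act g @^-1` core = core.
Proof.
have [_ actM _ _] := actP => Ng; apply/seteqP; split=> x /= cx h Nh.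
  have := cx (gmul h (ginv g)) (NM _ _ Nh (NV _ Ng)).
  by rewrite -actM -monoid.mulgA monoid.mulVg monoid.mulg1.
by rewrite -actM; apply: cx; exact: NM.
Qed.

Let core_sub : core `<=` C.
Proof. by have [act1 _ _ _] := actP => x /(_ gone N1); rewrite act1. Qed.

Lemma ergodic_ae_invariant : ergodic_on mu act N ->
  (forall g, N g -> \forall x \ae mu, C x -> C (act g x)) ->
  mu C = 0%E \/ mu C = 1%E.
Proof.
move=> erg aeC.
have {}aeC : \forall x \ae mu, forall g, N g -> C x -> C (act g x).
  apply: ae_forall_countable => // g; have [/aeC|nNg] := pselect (N g).
    by apply: filterS => x Cgx _.
  by apply: aeW => x /nNg.
have null_rest : mu.-negligible (C `\` core).
  by apply: negligibleS aeC => x [Cx ncx] all; apply: ncx => g Ng; exact: all.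
rewrite (measureDI mu mC measurable_core).
rewrite (measure_negligible (measurableD mC measurable_core) null_rest).
rewrite add0e setIidr //; exact: erg.
Qed.

End ErgodicAeInvariant.

Lemma factor_kernel_ergodic_zero_one {G : groupType} {R : realType}
    {d : measure_display} {X : measurableType d} {mu : probability X R}
    {act : G -> X -> X} {d' : measure_display} {Y : measurableType d'}
    {nu : probability Y R} {actY : G -> Y -> Y} {f : Y -> R} :
  countable [set: G] -> mp_action mu act -> mp_action nu actY ->
  injective f -> measurable_fun setT f ->
  is_factor mu act nu actY -> ergodic_on mu act (action_kernel nu actY) ->
  forall B, measurable B -> nu B = 0%E \/ nu B = 1%E.
Proof.
move=> cG actP actYP finj mf [pi [mpi push aeq]] erg B mB.
have [K1 KM KV _] := action_kernel_normal actYP finj mf.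
have mpre A : measurable A -> measurable (pi @^-1` A).
  by move=> mA; rewrite -[X in measurable X]setTI; exact: mpi.
rewrite -push //; apply: (ergodic_ae_invariant actP cG K1 KM KV (mpre _ mB) erg).
move=> g /(action_kernelP actYP finj mf) Kg.
have fixed_ae : \forall x \ae mu, actY g (pi x) = pi x.
  have mfix := measurable_fixed actYP finj mf g.
  change (mu.-negligible (pi @^-1` (~` [set y | actY g y = y]))).
  apply/negligibleP; first exact/mpre/measurableC.
  apply: eq_trans (push _ (measurableC mfix)) _.
  exact: measure_negligible (measurableC mfix) Kg.
by apply: filterS2 (aeq g) fixed_ae => x e1 e2 Bx; rewrite /= e1 e2.
Qed.

Lemma exists_natSinv_lt {R : realType} (e : R) :
  0 < e -> exists n : nat, n.+1%:R^-1 < e.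
Proof.
move=> e0; have eV0 : 0 < e^-1 by rewrite invr_gt0.
have := archi_boundP (ltW eV0).
move: (Num.Def.archi_bound e^-1) => n ltn; exists n.
rewrite -[X in _ < X]invrK ltf_pV2 ?posrE ?invr_gt0 ?ltr0n //.
by apply: lt_le_trans ltn _; rewrite ler_nat.
Qed.

Lemma exists_nat_gt_norm {R : realType} (x : R) : exists n : nat, `|x| < n%:R.
Proof. by exists (Num.Def.archi_bound `|x|); exact: archi_boundP. Qed.

Section ZeroOneDirac.
Context {d : measure_display} {Y : measurableType d} {R : realType}
  {nu : probability Y R} {f : Y -> R}.
Hypotheses (finj : injective f) (mf : measurable_fun setT f)
  (zero_one : forall B, measurable B -> nu B = 0%E \/ nu B = 1%E).

Let mfiber t : measurable (f @^-1` [set t]).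
Proof.
by rewrite -[X in measurable X]setTI; apply: mf => //; exact: measurable_set1.
Qed.

Let L (t : R) := f @^-1` `]-oo, t].

Let mL t : measurable (L t).
Proof.
by rewrite /L -[X in measurable X]setTI; apply: mf => //; exact: measurable_itv.
Qed.

Let null_cover (A : set Y) (F : (set Y)^nat) : measurable A ->
  (forall n, nu.-negligible (F n)) -> A `<=` \bigcup_n F n -> nu A = 0%E.
Proof.
move=> mA F0 AF; apply: measure_negligible mA _.
by have /negligibleS := negligible_bigcup F0; apply.
Qed.

Let full_cover (F : (set Y)^nat) : (forall n, measurable (F n)) ->
  (forall y, exists n, F n y) -> exists n, nu (F n) = 1%E.
Proof.
move=> mF cover; apply: contrapT => nfull.
have F0 n : nu (F n) = 0%E.
  by case: (zero_one _ (mF n)) => // F1; case: nfull; exists n.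
have coverT : setT `<=` \bigcup_n F n by move=> y _; have [n Fn] := cover y; exists n.
have F0' n : nu.-negligible (F n) by apply/negligibleP; [exact: mF | exact: F0].
have := null_cover _ _ measurableT F0' coverT.
by rewrite probability_setT => /eqP; rewrite onee_eq0.
Qed.

Let L_le s t : s <= t -> (nu (L s) <= nu (L t))%E.
Proof.
move=> st; apply: le_measure; rewrite ?inE //.
by move=> y; rewrite /L /= !in_itv /= => /le_trans; apply.
Qed.

Let S := [set t | nu (L t) = 1%E].

Let S_up s t : s <= t -> S s -> S t.
Proof.
move=> st Ss; apply/le_anti; rewrite probability_le1 //=.
by rewrite -[X in (X <= _)%E]Ss L_le.
Qed.

Let has_inf_S : has_inf S.
Proof.
split.
  have [n Ln] : exists n : nat, nu (L n%:R) = 1%E.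
    apply: full_cover => [n|y]; first exact: mL.
    have [n ltn] := exists_nat_gt_norm (f y); exists n.
    by rewrite /L /= in_itv /= ltW // (le_lt_trans (ler_norm _)).
  by exists n%:R.
have [n Ln] : exists n : nat, nu (~` L (- n%:R)) = 1%E.
  apply: full_cover => [n|y]; first exact/measurableC/mL.
  have [n ltn] := exists_nat_gt_norm (f y); exists n.
  rewrite /L /= in_itv /=; apply/negP; rewrite -ltNge ltrNl (le_lt_trans _ ltn) //.
  by rewrite -normrN ler_norm.
move: Ln => /(probability1_setC0 nu (measurableC (mL _))); rewrite setCK => Ln.
exists (- n%:R) => t St; rewrite leNgt; apply/negP => tn.
by have := L_le _ _ (ltW tn); rewrite St Ln lee_fin ler10.
Qed.

Let t0 := inf S.

Let fiber_t0_full : nu (f @^-1` [set t0]) = 1%E.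
Proof.
apply/(probability1_setC0 nu (mfiber t0)).
apply: (null_cover _ (fun n => ~` L (t0 + n.+1%:R^-1) `|` L (t0 - n.+1%:R^-1))).
- exact/measurableC/mfiber.
- move=> n; set e := n.+1%:R^-1; have e0 : 0 < e by rewrite invr_gt0.
  have mCL := measurableC (mL (t0 + e)).
  apply: negligibleU; apply/negligibleP; rewrite ?mL //.
    apply/(probability1_setC0 nu (mL _)).
    have [s Ss lts] := inf_adherent e0 has_inf_S.
    exact: S_up (ltW lts) Ss.
  case: (zero_one _ (mL (t0 - e))) => // /(ge_inf has_inf_S.2) t0_le.
  by exfalso; rewrite -/t0 in t0_le; lra.
move=> y /= /eqP ft0; case: ltgtP ft0 => // [lt|gt] _.
  have [n ltn] : exists n : nat, n.+1%:R^-1 < t0 - f y.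
    by apply: exists_natSinv_lt; rewrite subr_gt0.
  by exists n => //; right; rewrite /L /= in_itv /= lerBrDl addrC -lerBrDl ltW.
have [n ltn] : exists n : nat, n.+1%:R^-1 < f y - t0.
  by apply: exists_natSinv_lt; rewrite subr_gt0.
by exists n => //; left; rewrite /L /= in_itv /=; apply/negP; rewrite -ltNge -ltrBrDl.
Qed.

Lemma zero_one_dirac : exists y, forall B, measurable B -> nu B = \d_y B.
Proof.
have [y fy] : exists y, f y = t0.
  apply: contrapT => nex; have := fiber_t0_full.
  suff -> : f @^-1` [set t0] = set0.
    by rewrite measure0 => /eqP; rewrite eq_sym onee_eq0.
  by apply/seteqP; split => z // fz; apply: nex; exists z.
have fiberE : f @^-1` [set t0] = [set y].
  by apply/seteqP; split => z /=; [rewrite -fy => /finj | move->].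
have my : measurable [set y] by rewrite -fiberE.
have y_full : nu [set y] = 1%E by rewrite -fiberE.
exists y => B mB; rewrite diracE.
have [By|nBy] := pselect (B y).
  rewrite mem_set //; apply/le_anti; rewrite probability_le1 //= -y_full.
  by rewrite le_measure ?inE // => z ->.
rewrite memNset //; apply/eqP; rewrite -measure_le0.
rewrite -(probability1_setC0 nu my).1 //.
rewrite le_measure ?inE //; first exact: measurableC.
by move=> z Bz zy; apply: nBy; rewrite -zy.
Qed.

End ZeroOneDirac.

Lemma standard_borel_real (R : realType) : standard_borel R R.
Proof. by exists id; split=> // [|B mB]; rewrite image_id. Qed.

Section NameFactor.
Context {G : groupType} {R : realType} {d : measure_display} {X : measurableType d}
  {mu : probability X R} {act : G -> X -> X}.
Hypothesis actP : mp_action mu act.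
Context {j : G -> nat}.
Hypothesis jinj : {in [set: G] &, injective j}.
Context {A : set X}.
Hypothesis mA : measurable A.

Let unenum (n : nat) : G := 'pinv_(fun=> gone) [set: G] j n.

Let unenumK g : unenum (j g) = g.
Proof. exact: (pinvKV (fun=> gone) jinj (in_setT g)). Qed.

Let in_enum n : bool := j (unenum n) == n.

Let in_enum_j g : in_enum (j g).
Proof. by rewrite /in_enum unenumK. Qed.

(* Names are indexed through j and stored as reals by [ternary_code]; [shift]
   decodes a name, shifts it by g and re-encodes it, and is the identity off the
   set of codes of names. *)
Let name (x : X) : R := ternary_code R (fun n => in_enum n && (act (unenum n) x \in A)).

Let is_name (y : R) : bool :=
  ternary_code R (fun n => in_enum n && ternary_digit n y) == y.

Let shift (g : G) (y : R) : R :=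
  if is_name y
  then ternary_code R (fun n => in_enum n && ternary_digit (j (gmul (unenum n) g)) y)
  else y.

Let is_name_code (b : nat -> bool) :
  (forall n, b n -> in_enum n) -> is_name (ternary_code R b).
Proof.
move=> bP; rewrite /is_name; apply/eqP; congr ternary_code; apply: funext => n.
by rewrite ternary_digit_code; case bn: (b n); rewrite ?andbF // andbT bP.
Qed.

Let name_is_name x : is_name (name x).
Proof. by apply: is_name_code => n /andP[]. Qed.

Let shift_name g x : shift g (name x) = name (act g x).
Proof.
have [_ actM _ _] := actP.
rewrite /shift name_is_name /name; congr ternary_code; apply: funext => n.
by rewrite ternary_digit_code in_enum_j unenumK actM.
Qed.

Let shift1 y : shift gone y = y.
Proof.
rewrite /shift; case: ifPn => // /eqP {2}<-; congr ternary_code; apply: funext => n.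
by rewrite monoid.mulg1; case: (boolP (in_enum n)) => // /eqP ->.
Qed.

Let shiftM g h y : shift (gmul g h) y = shift g (shift h y).
Proof.
rewrite /shift; have [_|/negbTE -> //] := boolP (is_name y).
rewrite ifT; last by apply: is_name_code => n /andP[].
congr ternary_code; apply: funext => n.
by rewrite ternary_digit_code in_enum_j unenumK monoid.mulgA.
Qed.

Let measurable_in_enum_and d' (T : measurableType d') n (p : T -> bool) :
  measurable [set x | p x] -> measurable [set x | in_enum n && p x].
Proof.
case: (in_enum n) => //= _.
by have -> : [set x : T | false] = set0 by apply/seteqP; split.
Qed.

Let measurable_name : measurable_fun setT name.
Proof.
apply: measurable_ternary_code => n; apply: measurable_in_enum_and.
have -> : [set x | act (unenum n) x \in A] = setT `&` act (unenum n) @^-1` A.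
  apply/seteqP; split => x /=; rewrite in_setE; first by split.
  by case.
by have [_ _ mact _] := actP; exact: mact.
Qed.

Let measurable_shift g : measurable_fun setT (shift g).
Proof.
have mcode m : measurable_fun setT
    (fun y : R => ternary_code R (fun n => in_enum n && ternary_digit (m n) y)).
  apply: measurable_ternary_code => n.
  by apply: measurable_in_enum_and; exact: measurable_ternary_digit.
apply: measurable_fun_ifT; [| exact: mcode | exact: measurable_id].
apply: (measurable_fun_bool true).
pose decode (y : R) := ternary_code R (fun n => in_enum n && ternary_digit n y).
have -> : setT `&` is_name @^-1` [set true] = setT `&` (decode \- id) @^-1` [set 0].
  apply/seteqP; split => y /= [_]; rewrite /is_name /decode.
    by move=> /eqP ->; rewrite subrr.
  by move=> /eqP; rewrite subr_eq0.
have mdiff : measurable_fun setT (decode \- id).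
  by apply: measurable_funB => //; exact: mcode.
by apply: mdiff => //; exact: measurable_set1.
Qed.

Let nu : probability R R := distribution mu (mfun_Sub (mem_set measurable_name)).

Let nuE B : nu B = mu (name @^-1` B).
Proof. by []. Qed.

Let mp_action_shift : mp_action nu shift.
Proof.
split=> [|||g B mB]; [exact: shift1 | exact: shiftM | exact: measurable_shift |].
rewrite !nuE; have -> : name @^-1` (shift g @^-1` B) = act g @^-1` (name @^-1` B).
  by apply/seteqP; split => x /=; rewrite shift_name.
have [_ _ _ ->] := actP => //.
by rewrite -[X in measurable X]setTI; exact: measurable_name.
Qed.

Let name_factor : is_factor mu act nu shift.
Proof.
exists name; split => // g.
by apply: aeW => x; rewrite shift_name.
Qed.

Let nontrivial_nu : mu A <> 0%E -> mu A <> 1%E -> nontrivial nu.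
Proof.
move=> A0 A1 [y nu_dirac]; have := nu_dirac _ (measurable_ternary_digit R (j gone)).
rewrite nuE.
have [act1 _ _ _] := actP.
have -> : name @^-1` [set y | ternary_digit (j gone) y] = A.
  apply/seteqP; split => x /=;
    by rewrite /name ternary_digit_code in_enum_j unenumK act1 in_setE.
by rewrite diracE; case: (_ \in _).
Qed.

Let kernel_nu N : normal_subgroup N -> (forall g, N g -> act g @^-1` A = A) ->
  N `<=` action_kernel nu shift.
Proof.
move=> [_ _ _ Nconj] Ninv n Nn; have [_ actM _ _] := actP.
rewrite /action_kernel /= nuE.
suff -> : name @^-1` [set y | shift n y = y] = setT by rewrite probability_setT.
apply/seteqP; split => // x _ /=; rewrite shift_name; congr ternary_code.
apply: funext => k; congr andb; set g := unenum k.
have Ngng : N (gmul g (gmul n (ginv g))).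
  by have := Nconj (ginv g) n Nn; rewrite monoid.invgK.
rewrite -actM.
have -> : gmul g n = gmul (gmul g (gmul n (ginv g))) g.
  by rewrite -!monoid.mulgA monoid.mulVg monoid.mulg1.
by rewrite actM -{2}(Ninv _ Ngng).
Qed.

Lemma exists_name_factor : exists (nu : probability R R) (actY : G -> R -> R),
  [/\ mp_action nu actY, is_factor mu act nu actY,
      mu A <> 0%E -> mu A <> 1%E -> nontrivial nu &
      forall N, normal_subgroup N -> (forall g, N g -> act g @^-1` A = A) ->
        N `<=` action_kernel nu actY].
Proof.
exists nu, shift; split.
- exact: mp_action_shift.
- exact: name_factor.
- exact: nontrivial_nu.
- exact: kernel_nu.
Qed.

End NameFactor.

Lemma ergodic_normal_of_finite_kernels (G : groupType) (R : realType)
    (d : measure_display) (X : measurableType d) (mu : probability X R)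
    (act : G -> X -> X) :
  countable [set: G] -> mp_action mu act ->
  (forall (d' : measure_display) (Y : measurableType d') (nu : probability Y R)
      (actY : G -> Y -> Y),
    standard_borel R Y -> mp_action nu actY ->
    is_factor mu act nu actY -> nontrivial nu ->
    finite_set (action_kernel nu actY)) ->
  forall N : set G, normal_subgroup N -> infinite_set N -> ergodic_on mu act N.
Proof.
move=> /countable_injP[j jinj] actP fin_kernel N nN infN A mA Ninv.
have [nu [actY [actYP factor nontriv kernelN]]] := exists_name_factor actP jinj mA.
have [A0|A0] := pselect (mu A = 0%E); first by left.
have [A1|A1] := pselect (mu A = 1%E); first by right.
case: infN; apply: sub_finite_set (kernelN N nN Ninv) _.
exact: fin_kernel (standard_borel_real R) actYP factor (nontriv A0 A1).
Qed.

Lemma finite_kernels_of_ergodic_normal (G : groupType) (R : realType)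
    (d : measure_display) (X : measurableType d) (mu : probability X R)
    (act : G -> X -> X) :
  countable [set: G] -> mp_action mu act ->
  (forall N : set G, normal_subgroup N -> infinite_set N -> ergodic_on mu act N) ->
  forall (d' : measure_display) (Y : measurableType d') (nu : probability Y R)
      (actY : G -> Y -> Y),
    standard_borel R Y -> mp_action nu actY ->
    is_factor mu act nu actY -> nontrivial nu ->
    finite_set (action_kernel nu actY).
Proof.
move=> cG actP erg d' Y nu actY [f [finj mf _ _]] actYP factor nontriv.
apply: contrapT => infK; apply: nontriv; apply: (zero_one_dirac finj mf).
apply: (factor_kernel_ergodic_zero_one cG actP actYP finj mf factor).
exact: erg (action_kernel_normal actYP finj mf) infK.
Qed.

Theorem proposition1p2 (G : groupType) (R : realType)
  (d : measure_display) (X : measurableType d) (mu : probability X R)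
  (act : G -> X -> X) :
  countably_infinite G ->
  standard_borel R X ->
  mp_action mu act ->
  ((forall (d' : measure_display) (Y : measurableType d') (nu : probability Y R)
       (actY : G -> Y -> Y),
      standard_borel R Y -> mp_action nu actY ->
      is_factor mu act nu actY -> nontrivial nu ->
      finite_set (action_kernel nu actY))
   <->
   (forall N : set G, normal_subgroup N -> infinite_set N ->
      ergodic_on mu act N)).
Proof.
move=> [cG _] _ actP; split.
  exact: ergodic_normal_of_finite_kernels.
exact: finite_kernels_of_ergodic_normal.
Qed.
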